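(* The non-orientable genus of $K_6^3$ is $6$, i.e. $\widetilde{\mathsf{g}}(K_6^3)=6$.
   Context: $K_6^3$ is the complete $3$-uniform hypergraph on $\{1,\dots,6\}$ (edges: all $20$ triples). Its non-orientable genus is the non-orientable genus of its Levi graph, the bipartite graph with vertex set $[6]\sqcup\binom{[6]}{3}$ in which $i$ is adjacent to a triple $t$ iff $i\in t$. The non-orientable genus of a graph is the minimum $c$ such that it embeds in the non-orientable surface with $c$ crosscaps. *)

From HB Require Import structures.
From mathcomp Require Import all_boot all_order all_algebra all_fingroup.
Set Implicit Arguments. Unset Strict Implicit. Unset Printing Implicit Defensive.
Import GRing.Theory Num.Theory.

Section Embedding.
Variables (V : finType) (adj : rel V).
Hypothesis adj_sym : symmetric adj.

Definition dart := {p : V * V | adj p.1 p.2}.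

Definition dart_rev (d : dart) : dart :=
  @exist _ (fun p : V * V => adj p.1 p.2) ((val d).2, (val d).1)
    (etrans (esym (adj_sym (val d).1 (val d).2)) (valP d)).

Definition num_vertices : nat := #|V|.
Definition num_edges : nat :=
  #|[set [set p.1; p.2] | p in [set p : V * V | adj p.1 p.2]]|.

(* A general (signed) rotation system, a.k.a. embedding scheme:
   rho is the local rotation (a permutation of darts fixing the tail and
   cyclically permuting the darts at each vertex), lambda the edge signature. *)
Definition scheme_ok (rho : {perm dart}) (lambda : dart -> bool) : Prop :=
  [/\ forall d, (val (rho d)).1 = (val d).1,
      forall d d', (val d).1 = (val d').1 -> fconnect rho d d' &
      forall d, lambda (dart_rev d) = lambda d].

(* flags: (d, true) = corner at the tail of d between d and rho d,
          (d, false) = corner between rho^-1 d and d. *)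
Definition flag := (dart * bool)%type.

Definition t_vert (lambda : dart -> bool) (x : flag) : flag :=
  (dart_rev x.1, if lambda x.1 then x.2 else ~~ x.2).
Definition t_edge (rho : {perm dart}) (x : flag) : flag :=
  if x.2 then (rho x.1, false) else ((rho^-1)%g x.1, true).
Definition t_face (x : flag) : flag := (x.1, ~~ x.2).

(* faces = orbits of the group generated by t_vert and t_edge *)
Definition num_faces (rho : {perm dart}) (lambda : dart -> bool) : nat :=
  n_comp (fun x y : flag => (y == t_vert lambda x) || (y == t_edge rho x))
         predT.

Definition euler_genus (rho : {perm dart}) (lambda : dart -> bool) : int :=
  (2 - (num_vertices)%:Z + (num_edges)%:Z - (num_faces rho lambda)%:Z)%R.

Definition scheme_orientable (rho : {perm dart}) (lambda : dart -> bool) : Prop :=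
  exists col : flag -> bool, forall x : flag,
    [/\ col (t_vert lambda x) = ~~ col x,
        col (t_edge rho x) = ~~ col x &
        col (t_face x) = ~~ col x].

(* G embeds in the non-orientable surface N_c with c crosscaps iff it has a
   cellular embedding in a non-orientable surface of Euler genus <= c, or in
   an orientable surface of Euler genus < c. *)
Definition embeds_in_N (c : nat) : Prop :=
  exists (rho : {perm dart}) (lambda : dart -> bool),
    scheme_ok rho lambda /\
    ((scheme_orientable rho lambda /\ (euler_genus rho lambda < c%:Z)%R) \/
     (~ scheme_orientable rho lambda /\ (euler_genus rho lambda <= c%:Z)%R)).

Definition is_nonorientable_genus (g : nat) : Prop :=
  embeds_in_N g /\ forall c, (c < g)%N -> ~ embeds_in_N c.

End Embedding.

Definition triple := {t : {set 'I_6} | #|t| == 3}.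
Definition levi_vertex := ('I_6 + triple)%type.

Definition levi_adj : rel levi_vertex := fun x y =>
  match x, y with
  | inl i, inr t => i \in val t
  | inr t, inl i => i \in val t
  | _, _ => false
  end.

Lemma levi_adj_sym : symmetric levi_adj.
Proof. by case=> [i|t] [j|u]. Qed.

From mathcomp Require Import all_boot all_order all_algebra all_fingroup.
From mathcomp Require Import zify.
Set Implicit Arguments. Unset Strict Implicit. Unset Printing Implicit Defensive.

(* The Levi graph of K_6^3 has 26 vertices and 60 edges, is bipartite and has
   minimum degree at least 2.  In any embedding a face therefore has length at
   least 4 (even length by bipartiteness, and length 2 would force a vertex of
   degree 1), so it has at most 60 / 2 = 30 faces and Euler genus at least
   2 - 26 + 60 - 30 = 6.  Conversely, an explicit non-orientable quadrangular
   embedding has 30 faces, hence Euler genus 6.  It is non-orientable because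
   the twist of an orientable embedding is a coboundary, so every cycle has an
   even number of twisted edges, while one of its 4-cycles has an odd number. *)

Section ComponentCount.
Variables (T : finType) (e : rel T).
Hypothesis e_sym : connect_sym e.

Lemma n_comp_mul_leq_card m :
  (forall x, m <= #|[pred y | connect e x y]|) -> m * n_comp e predT <= #|T|.
Proof.
move=> big_comp; rewrite -sum1_card.
rewrite (partition_big (fingraph.root e) (roots e)) => [|x _]; last exact: roots_root.
have n_compE : n_comp e predT = #|[pred r | roots e r]|.
  by apply: eq_card => r; rewrite !inE andbT.
rewrite n_compE mulnC -sum_nat_const leq_sum // => r /eqP r_root.
rewrite sum1_card; apply: leq_trans (big_comp r) _.
apply/subset_leq_card/subsetP => y; rewrite inE => ry.
by apply/eqP; rewrite -[RHS]r_root; apply/eqP; rewrite (root_connect e_sym) e_sym.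
Qed.

Lemma n_comp_geq_labels (L : eqType) (lab : T -> L) (s : seq L) :
  (forall x y, e x y -> lab x = lab y) -> uniq s ->
  (forall z, z \in s -> exists x, lab x = z) -> size s <= n_comp e predT.
Proof.
move=> lab_e s_uniq s_lab.
have lab_root x : lab (fingraph.root e x) = lab x.
  have lab_closed : closed e [pred y | lab y == lab x].
    by move=> y z /lab_e; rewrite !inE => ->.
  by apply/eqP; rewrite -[_ == _]/(fingraph.root e x \in [pred y | lab y == lab x])
    -(closed_connect lab_closed (connect_root e x)) inE.
have -> : n_comp e predT = size (map lab (enum [pred r | roots e r])).
  by rewrite size_map -cardE; apply: eq_card => r; rewrite !inE andbT.
apply: uniq_leq_size => // z /s_lab [x <-]; rewrite -lab_root.
by apply: map_f; rewrite mem_enum inE roots_root.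
Qed.

End ComponentCount.

Fixpoint alternate (T : Type) (a b : T -> T) (n : nat) (x : T) : T :=
  if n is n'.+1 then (if odd n' then b else a) (alternate a b n' x) else x.

Lemma alternateD (T : Type) (a b : T -> T) i k x :
  alternate a b (i + k) x =
  (if odd i then alternate b a k else alternate a b k) (alternate a b i x).
Proof.
elim: k => [|k IHk]; first by rewrite addn0; case: ifP.
by rewrite addnS /= IHk oddD; case: (odd i); case: (odd k).
Qed.

Lemma connect_alternate (T : finType) (e : rel T) (a b : T -> T) k x :
  (forall y, e y (a y)) -> (forall y, e y (b y)) -> connect e x (alternate a b k x).
Proof.
move=> e_a e_b; elim: k => [|k IHk] /=; first exact: connect0.
by apply: connect_trans IHk (connect1 _); case: ifP.
Qed.

Section DihedralOrbit.
Variables (T : eqType) (a b : T -> T) (side : T -> bool).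
Hypotheses (aK : involutive a) (bK : involutive b).
Hypotheses (side_a : forall x, side (a x) = ~~ side x)
           (side_b : forall x, side (b x) = side x).
Hypotheses (b_fixfree : forall x, b x != x)
           (ab_neq_ba : forall x, a (b x) != b (a x)).

Lemma alternate_fixfree k x : 0 < k < 8 -> alternate a b k x != x /\ alternate b a k x != x.
Proof.
(* Words with an odd number of [a]s change [side]; cancelling involutions
   reduces each of the others to a fixed point of [b] or of [a \o b \o a \o b]. *)
have side_neq y z : side y != side z -> y != z.
  by apply: contra_neq => eq_yz; rewrite eq_yz.
have aba y : a (b (a y)) != y.
  by apply/eqP => /(congr1 a); rewrite aK; apply/eqP.
have abab y : a (b (a (b y))) != y.
  apply/eqP => /(congr1 a); rewrite aK => /(congr1 b); rewrite bK.
  exact/eqP/ab_neq_ba.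
have baba y : b (a (b (a y))) != y.
  apply/eqP => /(congr1 b); rewrite bK => /(congr1 a); rewrite aK => eq_ab.
  by have /eqP := ab_neq_ba y; rewrite eq_ab.
have babab y : b (a (b (a (b y)))) != y.
  apply/eqP => /(congr1 b); rewrite bK => /(congr1 a); rewrite aK.
  by move=> /(congr1 b); rewrite bK; apply/eqP; rewrite eq_sym.
have abababa y : a (b (a (b (a (b (a y)))))) != y.
  apply/eqP => /(congr1 a); rewrite aK => /(congr1 b); rewrite bK.
  by move=> /(congr1 a); rewrite aK; apply/eqP.
case: k => [|[|[|[|[|[|[|[|k]]]]]]]] //= _; split.
all: first [ exact: b_fixfree | exact: aba | exact: abab | exact: baba
           | exact: babab | exact: abababa
           | apply: side_neq; do ![rewrite side_a | rewrite side_b];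
             by case: (side x) ].
Qed.

Lemma alternate_uniq x : uniq [seq alternate a b k x | k <- iota 0 8].
Proof.
have alt_neq i j : i < j -> j < 8 -> alternate a b j x != alternate a b i x.
  move=> lt_ij lt_j8; rewrite -(subnKC (ltnW lt_ij)) alternateD.
  have k_range : 0 < j - i < 8 by apply/andP; split; lia.
  have [ne_ab ne_ba] := alternate_fixfree (alternate a b i x) k_range.
  by case: ifP.
rewrite map_inj_in_uniq ?iota_uniq // => i j; rewrite !mem_iota /= => lt_i8 lt_j8.
case: (ltngtP i j) => [lt_ij|lt_ji|//] eq_ij.
  by move: (alt_neq _ _ lt_ij lt_j8); rewrite eq_ij eqxx.
by move: (alt_neq _ _ lt_ji lt_i8); rewrite eq_ij eqxx.
Qed.

End DihedralOrbit.

(** * Embedding schemes of bipartite graphs *)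

Notation src d := (val d).1.
Notation tgt d := (val d).2.

Section Embeddings.
Variables (V : finType) (adj : rel V) (adj_sym : symmetric adj).
Local Notation dart := (dart adj).
Local Notation rev := (dart_rev adj_sym).

Lemma dart_eq (d d' : dart) : src d = src d' -> tgt d = tgt d' -> d = d'.
Proof.
move=> eq_src eq_tgt; apply: val_inj.
by rewrite [val d]surjective_pairing eq_src eq_tgt -surjective_pairing.
Qed.

Lemma dart_revK : involutive rev.
Proof. by move=> d; apply: dart_eq. Qed.

Variable side : V -> bool.
Hypothesis side_adj : forall u v, adj u v -> side v = ~~ side u.

Lemma num_edges_bipartite :
  num_edges adj = #|[set p : V * V | adj p.1 p.2 && side p.1]|.
Proof.
rewrite /num_edges -(@card_in_imset _ _ (fun p : V * V => [set p.1; p.2])).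
  apply: eq_card => E; apply/imsetP/imsetP => [[p]|[p]]; last first.
    by rewrite !inE => /andP[adj_p _] ->; exists p; rewrite ?inE.
  rewrite inE => adj_p ->; case side_p: (side p.1).
    by exists p; rewrite ?inE ?adj_p ?side_p.
  exists (p.2, p.1); last by rewrite /= setUC.
  by rewrite inE /= adj_sym adj_p (side_adj adj_p) side_p.
move=> [u v] [u' v']; rewrite !inE /= => /andP[adj_uv side_u] /andP[adj_uv' side_u'].
have side_v : side v = false by rewrite (side_adj adj_uv) side_u.
have side_v' : side v' = false by rewrite (side_adj adj_uv') side_u'.
move=> eq_uv; have mem_uv w : w \in [set u; v] -> w = u' \/ w = v'.
  by rewrite eq_uv => /set2P.
case: (mem_uv u (set21 u v)) => [eq_u | eq_u]; last first.
  by move: side_u; rewrite eq_u side_v'.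
case: (mem_uv v (set22 u v)) => [eq_v | ->]; last by rewrite eq_u.
by move: side_v; rewrite eq_v side_u'.
Qed.

Lemma card_dart_bipartite : #|{: dart}| = 2 * num_edges adj.
Proof.
pose swap (p : V * V) := (p.2, p.1).
have swap_inj : injective swap by apply: (can_inj (g := swap)); case.
rewrite card_sig -(cardID [pred p : V * V | side p.1] [pred p | adj p.1 p.2]).
rewrite num_edges_bipartite mul2n -addnn; congr (_ + _); first by apply: eq_card => p; rewrite !inE.
rewrite -(card_preimset _ swap_inj); apply: eq_card => -[u v]; rewrite !inE /=.
by rewrite [adj v u]adj_sym; case adj_uv: (adj u v); rewrite ?andbF // (side_adj adj_uv) andbC.
Qed.

Section Scheme.
Variables (rho : {perm dart}) (lambda : dart -> bool).
Hypothesis rl_ok : scheme_ok adj_sym rho lambda.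
Local Notation tv := (t_vert adj_sym lambda).
Local Notation te := (t_edge rho).
Local Notation face_rel := (fun x y => (y == tv x) || (y == te x)).

Lemma src_rho d : src (rho d) = src d.
Proof. by case: rl_ok. Qed.

Lemma src_rhoV d : src ((rho^-1)%g d) = src d.
Proof. by rewrite -{2}(permKV rho d) src_rho. Qed.

Lemma t_vertK : involutive tv.
Proof.
case: rl_ok => _ _ lambda_rev [d s]; rewrite /t_vert /= dart_revK lambda_rev.
by case: (lambda d); rewrite ?negbK.
Qed.

Lemma t_edgeK : involutive te.
Proof. by case=> d [] /=; rewrite /t_edge /= ?permK ?permKV. Qed.

Lemma face_rel_sym : connect_sym face_rel.
Proof.
apply: sym_connect_sym => x y.
by apply/idP/idP => /orP[] /eqP ->; rewrite ?t_vertK ?t_edgeK eqxx ?orbT.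
Qed.

Lemma orientable_twist_coboundary :
  scheme_orientable adj_sym rho lambda ->
  exists f : V -> bool, forall d, lambda d = f (src d) (+) f (tgt d).
Proof.
case=> col col_flip; pose K d := col (d, true).
(* [K] is constant around each vertex and changes along [d] iff [d] is twisted. *)
have col_false d : col (d, false) = ~~ K d by case: (col_flip (d, true)).
have K_rho d : K (rho d) = K d.
  by case: (col_flip (d, true)) => _ + _; rewrite /t_edge /= col_false => /negb_inj.
have K_rev d : K (rev d) = lambda d (+) K d.
  case: (col_flip (d, true)) => + _ _; rewrite /t_vert /=.
  by case: (lambda d) => //=; rewrite col_false => /negb_inj.
have K_src d d' : src d = src d' -> K d = K d'.
  case: rl_ok => _ rho_trans _ /rho_trans /iter_findex <-.
  by elim: (findex _ _ _) => //= n ->; rewrite K_rho.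
exists (fun u => [exists d, (src d == u) && K d]) => d.
have f_src d0 : [exists d1, (src d1 == src d0) && K d1] = K d0.
  apply/existsP/idP => [[d1 /andP[/eqP /K_src -> //]]|Kd0].
  by exists d0; rewrite eqxx.
by rewrite f_src -[tgt d]/(src (rev d)) f_src K_rev; case: (K d); case: (lambda d).
Qed.

Hypothesis dart_sibling : forall d : dart, exists2 d', d' != d & src d' = src d.

Lemma rho_fixfree d : rho d != d.
Proof.
have [d' ne_d'd src_d'] := dart_sibling d.
apply: contra_neq ne_d'd => rho_d; case: rl_ok => _ rho_trans _.
by have /iter_findex <- := rho_trans _ _ (esym src_d'); rewrite iter_fix.
Qed.

Lemma src_t_edge x : src (te x).1 = src x.1.
Proof. by rewrite /t_edge; case: x.2; rewrite /= ?src_rho ?src_rhoV. Qed.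

Lemma t_edge_neq x : te x != x.
Proof. by case: x => d []; rewrite /t_edge xpair_eqE andbF. Qed.

Lemma t_edge_dart_neq x : (te x).1 != x.1.
Proof.
rewrite /t_edge; case: x.2 => /=; first exact: rho_fixfree.
by apply: contra_neq (rho_fixfree x.1) => rhoV_x; rewrite -{1}rhoV_x permKV.
Qed.

Lemma t_vert_t_edge_neq x : tv (te x) != te (tv x).
Proof.
apply: contra_neq (t_edge_dart_neq x) => /(congr1 fst) /= rev_te.
apply: dart_eq; first exact: src_t_edge.
by rewrite -[tgt _]/(src (rev _)) rev_te src_t_edge.
Qed.

Lemma card_face_geq8 x : 8 <= #|[pred y | connect face_rel x y]|.
Proof.
pose fside (y : flag adj) := side (src y.1).
have fside_tv y : fside (tv y) = ~~ fside y by exact: side_adj (valP y.1).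
have fside_te y : fside (te y) = fside y by rewrite /fside src_t_edge.
rewrite cardE -(size_iota 0 8) -(size_map (alternate tv te ^~ x)).
have walk_uniq :=
  alternate_uniq t_vertK t_edgeK fside_tv fside_te t_edge_neq t_vert_t_edge_neq x.
apply: uniq_leq_size => // _ /mapP[k _ ->]; rewrite mem_enum inE.
by apply: connect_alternate => y; rewrite eqxx ?orbT.
Qed.

Lemma num_faces_bipartite_leq : 2 * num_faces adj_sym rho lambda <= num_edges adj.
Proof.
rewrite -(leq_pmul2l (isT : 0 < 4)) mulnA.
apply: leq_trans (n_comp_mul_leq_card face_rel_sym card_face_geq8) _.
by rewrite card_prod card_bool card_dart_bipartite; lia.
Qed.

End Scheme.
End Embeddings.

Lemma odd_count_walk (T U : eqType) (from to : T -> U) (g : U -> bool)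
    (h : T -> bool) (x : T) (w : seq T) :
  {in x :: w, forall y, h y = g (from y) (+) g (to y)} ->
  path (fun y z => to y == from z) x w ->
  odd (count h (x :: w)) = g (from x) (+) g (to (last x w)).
Proof.
elim: w x => [|y w IHw] x h_cobound; first by rewrite /= addn0 oddb h_cobound ?mem_head.
have h_tail : {in y :: w, forall z, h z = g (from z) (+) g (to z)}.
  by move=> z z_in; apply: h_cobound; rewrite in_cons z_in orbT.
case/andP=> /eqP to_x /(IHw y h_tail) IH.
rewrite -[count h _]/(h x + count h (y :: w)) oddD oddb IH h_cobound ?mem_head //.
by rewrite to_x -addbA (addbA (g (from y))) addbb.
Qed.

Fixpoint subseqs (T : Type) (s : seq T) : seq (seq T) :=
  if s is x :: s' then [seq x :: c | c <- subseqs s'] ++ subseqs s' else [:: [::]].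

Lemma mem_subseqs (T : eqType) (s c : seq T) : (c \in subseqs s) = subseq c s.
Proof.
elim: s c => [|x s IHs] [|y c] //=; rewrite mem_cat IHs ?sub0seq ?orbT //.
case: eqP => [->|ne_yx]; last first.
  by case: mapP => [[c' _ [/ne_yx]]|].
rewrite mem_map ?IHs; last by move=> c1 c2 [].
apply/orP/idP => [[//|]|]; last by left.
by apply: subseq_trans; apply: subseq_cons.
Qed.

Definition elems n (A : {set 'I_n}) : seq nat := [seq val i | i <- enum A].

Lemma mem_elems n (A : {set 'I_n}) i : (val i \in elems A) = (i \in A).
Proof. by rewrite mem_map ?mem_enum //; apply: val_inj. Qed.

Lemma size_elems n (A : {set 'I_n}) : size (elems A) = #|A|.
Proof. by rewrite size_map cardE. Qed.

Lemma elems_inj n : injective (@elems n).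
Proof. by move=> A B eq_AB; apply/setP => i; rewrite -!mem_elems eq_AB. Qed.

Lemma elems_set n (P : pred nat) :
  elems [set i : 'I_n | P (val i)] = [seq j <- iota 0 n | P j].
Proof.
rewrite /elems /enum_mem -enumT -val_enum_ord filter_map.
by congr map; apply: eq_filter => i; rewrite !inE.
Qed.

Lemma elems_subseq n (A : {set 'I_n}) : subseq (elems A) (iota 0 n).
Proof.
have -> : A = [set i : 'I_n | val i \in elems A] by apply/setP => i; rewrite inE mem_elems.
by rewrite elems_set filter_subseq.
Qed.

Lemma elems_of_subseq n (c : seq nat) :
  subseq c (iota 0 n) -> elems [set i : 'I_n | val i \in c] = c.
Proof. by rewrite elems_set => /(subseq_uniqP (iota_uniq 0 n)) <-. Qed.

(** * The Levi graph of K_6^3 *)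

Definition is_point (v : levi_vertex) : bool := if v is inl _ then true else false.

Lemma levi_side_adj u v : levi_adj u v -> is_point v = ~~ is_point u.
Proof. by case: u v => [i|t] [j|t']. Qed.

Lemma card_triple : #|{: triple}| = 20.
Proof. by rewrite card_sig -cardsE card_draws card_ord. Qed.

Lemma levi_num_vertices : num_vertices levi_vertex = 26.
Proof. by rewrite /num_vertices card_sum card_ord card_triple. Qed.

Lemma card_incidences : #|[set p : 'I_6 * triple | p.1 \in val p.2]| = 60.
Proof.
rewrite -sum1_card big_mkcond.
rewrite (eq_bigr (fun p : 'I_6 * triple => nat_of_bool (p.1 \in val p.2))) => [|p _]; last first.
  by rewrite inE; case: (_ \in _).
rewrite -(pair_bigA _ (fun i (t : triple) => nat_of_bool (i \in val t))).
rewrite exchange_big /= -[60]/(20 * 3) -card_triple -sum_nat_const.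
apply: eq_bigr => t _; apply: etrans _ (eqP (valP t)).
by rewrite -sum1_card [RHS]big_mkcond; apply: eq_bigr => i _; case: (_ \in _).
Qed.

Lemma levi_num_edges : num_edges levi_adj = 60.
Proof.
rewrite (num_edges_bipartite levi_adj_sym levi_side_adj) -card_incidences.
pose inc (p : 'I_6 * triple) : levi_vertex * levi_vertex := (inl p.1, inr p.2).
have inc_inj : injective inc by move=> [i t] [j u] [-> ->].
rewrite -(card_imset _ inc_inj); apply: eq_card => -[u v]; rewrite inE.
apply/idP/imsetP => [|[[i t] + [-> ->]]]; last by rewrite inE /= => ->.
case: u v => [i|t] [j|t'] //=; rewrite ?andbF // andbT => i_t'.
by exists (i, t'); rewrite ?inE.
Qed.

Notation levi_dart := (dart levi_adj).

Definition vertex_set (v : levi_vertex) : {set 'I_6} :=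
  match v with inl i => [set i] | inr t => val t end.

(* Vertices are coded by the increasing lists of elements of the corresponding
   1- and 3-subsets of [0, 6), so that the explicit embedding below can be
   checked by computation on codes. *)
Definition code (v : levi_vertex) : seq nat := elems (vertex_set v).

Lemma code_point i : code (inl i) = [:: val i].
Proof. by rewrite /code /elems /= enum_set1. Qed.

Lemma size_code_triple t : size (code (inr t)) = 3.
Proof. by rewrite size_elems; apply/eqP/(valP t). Qed.

Lemma code_inj : injective code.
Proof.
have card_set1 (i : 'I_6) (t : triple) : [set i] != val t.
  by apply: contraTneq (valP t) => <-; rewrite cards1.
move=> u v /elems_inj; case: u v => [i|t] [j|t'] /=.
- by move/set1_inj ->.
- by move/eqP; rewrite (negbTE (card_set1 _ _)).
- by move/esym/eqP; rewrite (negbTE (card_set1 _ _)).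
- by move/val_inj ->.
Qed.

Definition code_adj (c c' : seq nat) : bool :=
  if c is [:: i] then (size c' == 3) && (i \in c')
  else if c' is [:: j] then (size c == 3) && (j \in c) else false.

Lemma levi_adj_code u v : levi_adj u v = code_adj (code u) (code v).
Proof.
have triple_code t : exists x y z, code (inr t) = [:: x; y; z].
  by move: (size_code_triple t); case: (code _) => [|x [|y [|z [|]]]] // _; exists x, y, z.
case: u v => [i|t] [j|t']; rewrite ?code_point.
- by [].
- by rewrite /= size_code_triple -mem_elems.
- by have [x [y [z code_t]]] := triple_code t; rewrite code_t /= -code_t mem_elems.
- by have [x [y [z ->]]] := triple_code t; have [x' [y' [z' ->]]] := triple_code t'.
Qed.

Definition vertex_codes : seq (seq nat) :=
  [seq c <- subseqs (iota 0 6) | size c \in [:: 1; 3]].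

Lemma code_in_vertex_codes v : code v \in vertex_codes.
Proof.
rewrite mem_filter mem_subseqs elems_subseq andbT.
by case: v => [i|t]; rewrite ?code_point ?size_code_triple.
Qed.

Lemma code_onto c : c \in vertex_codes -> exists v, code v = c.
Proof.
rewrite mem_filter mem_subseqs !inE => /andP[size_c sub_c].
set A := [set i : 'I_6 | val i \in c].
have code_A : elems A = c := elems_of_subseq sub_c.
have card_A : #|A| = size c by rewrite -code_A size_elems.
case/orP: size_c => /eqP size_c.
  have /cards1P[i A_i] : #|A| == 1 by rewrite card_A size_c.
  by exists (inl i); rewrite /code /= -A_i.
have card_A3 : #|A| == 3 by rewrite card_A size_c.
by exists (inr (exist _ A card_A3)).
Qed.

Definition dart_codes : seq (seq nat * seq nat) :=
  [seq p <- [seq (c, c') | c <- vertex_codes, c' <- vertex_codes] | code_adj p.1 p.2].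

Definition code_dart (d : levi_dart) : seq nat * seq nat := (code (src d), code (tgt d)).

Lemma code_dart_in d : code_dart d \in dart_codes.
Proof.
rewrite mem_filter -levi_adj_code (valP d).
by apply: allpairs_f; apply: code_in_vertex_codes.
Qed.

Lemma code_dart_inj : injective code_dart.
Proof. by move=> d d' [/code_inj src_d /code_inj tgt_d]; apply: dart_eq. Qed.

Lemma code_dart_onto p : p \in dart_codes -> exists d, code_dart d = p.
Proof.
rewrite mem_filter => /andP[adj_p /allpairsP[[c c'] [c_in c'_in eq_p]]].
move: c_in c'_in adj_p; rewrite {}eq_p /= => c_in c'_in.
have [[u <-] [v <-]] := (code_onto c_in, code_onto c'_in).
by rewrite -levi_adj_code => adj_uv; exists (exist _ (u, v) adj_uv).
Qed.

(** * An embedding with 30 faces *)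

(* The rotation at the point [i] is [nth [::] point_rotation i]; at a triple it is
   the increasing order of its points (which can always be arranged by switching,
   i.e. reversing the rotation at a vertex and toggling the twists of its edges).
   [twisted_at i] lists the triples [t] for which the edge {i, t} is twisted. *)
Definition point_rotation : seq (seq (seq nat)) := [::
  [:: [:: 0; 1; 2]; [:: 0; 2; 3]; [:: 0; 1; 3]; [:: 0; 1; 4]; [:: 0; 4; 5];
      [:: 0; 3; 5]; [:: 0; 3; 4]; [:: 0; 2; 4]; [:: 0; 2; 5]; [:: 0; 1; 5]];
  [:: [:: 0; 1; 2]; [:: 1; 2; 5]; [:: 1; 3; 5]; [:: 1; 3; 4]; [:: 0; 1; 4];
      [:: 0; 1; 3]; [:: 1; 2; 3]; [:: 1; 2; 4]; [:: 1; 4; 5]; [:: 0; 1; 5]];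
  [:: [:: 0; 1; 2]; [:: 0; 2; 3]; [:: 2; 3; 5]; [:: 0; 2; 5]; [:: 0; 2; 4];
      [:: 2; 3; 4]; [:: 1; 2; 3]; [:: 1; 2; 4]; [:: 2; 4; 5]; [:: 1; 2; 5]];
  [:: [:: 0; 1; 3]; [:: 1; 2; 3]; [:: 2; 3; 4]; [:: 3; 4; 5]; [:: 1; 3; 5];
      [:: 1; 3; 4]; [:: 0; 3; 4]; [:: 0; 3; 5]; [:: 2; 3; 5]; [:: 0; 2; 3]];
  [:: [:: 0; 1; 4]; [:: 1; 3; 4]; [:: 0; 3; 4]; [:: 0; 2; 4]; [:: 2; 3; 4];
      [:: 3; 4; 5]; [:: 1; 4; 5]; [:: 1; 2; 4]; [:: 2; 4; 5]; [:: 0; 4; 5]];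
  [:: [:: 0; 1; 5]; [:: 0; 2; 5]; [:: 2; 3; 5]; [:: 0; 3; 5]; [:: 0; 4; 5];
      [:: 2; 4; 5]; [:: 1; 2; 5]; [:: 1; 3; 5]; [:: 3; 4; 5]; [:: 1; 4; 5]]].

Definition twisted_at : seq (seq (seq nat)) := [::
  [:: [:: 0; 1; 3]; [:: 0; 1; 5]; [:: 0; 2; 4]; [:: 0; 3; 5]];
  [:: [:: 0; 1; 2]; [:: 0; 1; 3]; [:: 1; 2; 3]; [:: 1; 3; 5]];
  [:: [:: 0; 1; 2]; [:: 0; 2; 3]; [:: 0; 2; 4]; [:: 1; 2; 4]; [:: 2; 3; 4]];
  [:: [:: 0; 2; 3]; [:: 0; 3; 5]; [:: 1; 3; 4]; [:: 2; 3; 4]];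
  [:: [:: 0; 3; 4]; [:: 2; 4; 5]; [:: 3; 4; 5]];
  [:: [:: 0; 1; 5]; [:: 0; 3; 5]; [:: 1; 2; 5]; [:: 1; 4; 5]; [:: 2; 4; 5]]].

Definition rotation (c : seq nat) : seq (seq nat) :=
  if c is [:: i] then nth [::] point_rotation i else [seq [:: j] | j <- c].

Definition twisted (c c' : seq nat) : bool :=
  if c is [:: i] then c' \in nth [::] twisted_at i else false.

Definition code_rho (p : seq nat * seq nat) := (p.1, next (rotation p.1) p.2).
Definition code_rhoV (p : seq nat * seq nat) := (p.1, prev (rotation p.1) p.2).
Definition code_lambda (p : seq nat * seq nat) := twisted p.1 p.2 || twisted p.2 p.1.

Lemma code_rotation_ok :
  {in dart_codes, forall p, [&& code_rho p \in dart_codes, code_rhoV p \in dart_codes,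
                                uniq (rotation p.1) & code_rho p != p]}.
Proof. by apply/allP; vm_compute. Qed.

Lemma code_rotation_transitive :
  {in dart_codes, forall p, all (fun q =>
     (p.1 == q.1) ==> has (fun n => iter n code_rho p == q) (iota 0 10)) dart_codes}.
Proof. by apply/allP; vm_compute. Qed.

Definition dart_of (p : seq nat * seq nat) (d : levi_dart) : levi_dart :=
  odflt d [pick d' | code_dart d' == p].

Lemma code_dart_of p d : p \in dart_codes -> code_dart (dart_of p d) = p.
Proof.
move=> /code_dart_onto[d' code_d']; rewrite /dart_of.
by case: pickP => [d'' /eqP //|/(_ d')]; rewrite code_d' eqxx.
Qed.

Definition levi_rho_fun (d : levi_dart) := dart_of (code_rho (code_dart d)) d.
Definition levi_rhoV_fun (d : levi_dart) := dart_of (code_rhoV (code_dart d)) d.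

Lemma code_levi_rho d : code_dart (levi_rho_fun d) = code_rho (code_dart d).
Proof. by have /and4P[? _ _ _] := code_rotation_ok (code_dart_in d); apply: code_dart_of. Qed.

Lemma code_levi_rhoV d : code_dart (levi_rhoV_fun d) = code_rhoV (code_dart d).
Proof. by have /and4P[_ ? _ _] := code_rotation_ok (code_dart_in d); apply: code_dart_of. Qed.

Lemma levi_rho_funK : cancel levi_rho_fun levi_rhoV_fun.
Proof.
move=> d; apply: code_dart_inj; rewrite code_levi_rhoV code_levi_rho.
have /and4P[_ _ uniq_rot _] := code_rotation_ok (code_dart_in d).
by rewrite /code_rhoV /code_rho /= prev_next.
Qed.

Lemma levi_rhoV_funK : cancel levi_rhoV_fun levi_rho_fun.
Proof.
move=> d; apply: code_dart_inj; rewrite code_levi_rho code_levi_rhoV.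
have /and4P[_ _ uniq_rot _] := code_rotation_ok (code_dart_in d).
by rewrite /code_rhoV /code_rho /= next_prev.
Qed.

Definition levi_rho : {perm levi_dart} := perm (can_inj levi_rho_funK).
Definition levi_lambda (d : levi_dart) : bool := code_lambda (code_dart d).

Lemma levi_rhoE : levi_rho =1 levi_rho_fun.
Proof. exact: permE. Qed.

Lemma levi_rhoVE : (levi_rho^-1)%g =1 levi_rhoV_fun.
Proof. by move=> d; apply: (@perm_inj _ levi_rho); rewrite permKV levi_rhoE levi_rhoV_funK. Qed.

Lemma src_levi_rho d : src (levi_rho_fun d) = src d.
Proof. by apply: code_inj; have [] := code_levi_rho d. Qed.

Lemma code_iter_levi_rho n d : code_dart (iter n levi_rho d) = iter n code_rho (code_dart d).
Proof. by elim: n => //= n IHn; rewrite levi_rhoE code_levi_rho IHn. Qed.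

Lemma levi_scheme_ok : scheme_ok levi_adj_sym levi_rho levi_lambda.
Proof.
split=> [d | d d' src_dd' | d]; first by rewrite levi_rhoE src_levi_rho.
- have same_src : (code_dart d).1 == (code_dart d').1 by rewrite /= src_dd'.
  have /hasP[n _ /eqP iter_n] :=
    implyP (allP (code_rotation_transitive (code_dart_in d)) _ (code_dart_in d')) same_src.
  have -> : d' = iter n levi_rho d by apply: code_dart_inj; rewrite code_iter_levi_rho.
  exact: fconnect_iter.
- by rewrite /levi_lambda /code_lambda orbC.
Qed.

Definition code_flag (x : flag levi_adj) := (code_dart x.1, x.2).

Definition code_tv (y : (seq nat * seq nat) * bool) :=
  ((y.1.2, y.1.1), if code_lambda y.1 then y.2 else ~~ y.2).
Definition code_te (y : (seq nat * seq nat) * bool) :=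
  if y.2 then (code_rho y.1, false) else (code_rhoV y.1, true).

Lemma code_t_vert x : code_flag (t_vert levi_adj_sym levi_lambda x) = code_tv (code_flag x).
Proof. by []. Qed.

Lemma code_t_edge x : code_flag (t_edge levi_rho x) = code_te (code_flag x).
Proof.
by case: x => d []; rewrite /code_flag /= ?levi_rhoE ?levi_rhoVE ?code_levi_rho ?code_levi_rhoV.
Qed.

Definition flag_codes := [seq (p, s) | p <- dart_codes, s <- [:: true; false]].

Lemma code_flag_in x : code_flag x \in flag_codes.
Proof. by apply: allpairs_f; [apply: code_dart_in | case: x.2]. Qed.

Lemma code_flag_onto y : y \in flag_codes -> exists x, code_flag x = y.
Proof.
case/allpairsP=> [[p s] [/code_dart_onto[d <-] _ ->]].
by exists (d, s).
Qed.

(* The eight flags of the face of [y], listed in [flag_codes] order; the [let]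
   makes [vm_compute] build the walk only once. *)
Definition code_face (y : (seq nat * seq nat) * bool) :=
  let walk := [seq alternate code_tv code_te k y | k <- iota 0 8] in
  [seq z <- flag_codes | z \in walk].

Lemma code_face_invariant :
  {in flag_codes, forall y,
     (code_face (code_tv y) == code_face y) && (code_face (code_te y) == code_face y)}.
Proof. by apply/allP; vm_compute. Qed.

Lemma code_face_count : size (undup [seq code_face y | y <- flag_codes]) = 30.
Proof. by vm_compute. Qed.

Lemma levi_num_faces_geq : 30 <= num_faces levi_adj_sym levi_rho levi_lambda.
Proof.
rewrite -code_face_count.
apply: (n_comp_geq_labels (face_rel_sym levi_scheme_ok)
         (lab := fun x => code_face (code_flag x))).
- move=> x y; have /andP[/eqP face_tv /eqP face_te] := code_face_invariant (code_flag_in x).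
  case/orP=> /eqP ->.
  + by rewrite code_t_vert; exact: esym face_tv.
  + by rewrite code_t_edge; exact: esym face_te.
- exact: undup_uniq.
- by move=> z; rewrite mem_undup => /mapP[y /code_flag_onto[x <-] ->]; exists x.
Qed.

Definition odd_cycle_start : seq nat * seq nat := ([:: 0], [:: 0; 1; 2]).
Definition odd_cycle : seq (seq nat * seq nat) :=
  [:: ([:: 0; 1; 2], [:: 1]); ([:: 1], [:: 0; 1; 3]); ([:: 0; 1; 3], [:: 0])].

Lemma odd_cycle_ok :
  [&& all [in dart_codes] (odd_cycle_start :: odd_cycle),
      path (fun p q => p.2 == q.1) odd_cycle_start odd_cycle,
      (last odd_cycle_start odd_cycle).2 == odd_cycle_start.1 &
      odd (count code_lambda (odd_cycle_start :: odd_cycle))].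
Proof. by vm_compute. Qed.

Lemma levi_not_orientable : ~ scheme_orientable levi_adj_sym levi_rho levi_lambda.
Proof.
move=> /(orientable_twist_coboundary levi_scheme_ok)[f f_cobound].
pose vertex_of c := odflt (inl ord0) [pick v | code v == c].
have vertex_of_code v : vertex_of (code v) = v.
  rewrite /vertex_of; case: pickP => [v' /eqP /code_inj //|/(_ v)].
  by rewrite eqxx.
have lambda_cobound : {in dart_codes, forall p,
    code_lambda p = f (vertex_of p.1) (+) f (vertex_of p.2)}.
  move=> p /code_dart_onto[d <-]; rewrite -[code_lambda _]/(levi_lambda d) f_cobound.
  by rewrite /= !vertex_of_code.
case/and4P: odd_cycle_ok => /allP cycle_in cycle_path /eqP cycle_closed.
rewrite (odd_count_walk (g := f \o vertex_of) _ cycle_path) => [|p /cycle_in].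
  by rewrite cycle_closed addbb.
exact: lambda_cobound.
Qed.

Lemma levi_dart_sibling (d : levi_dart) : exists2 d', d' != d & src d' = src d.
Proof.
exists (levi_rho_fun d); last exact: src_levi_rho.
have /and4P[_ _ _ moved] := code_rotation_ok (code_dart_in d).
by apply: contra_neq moved => eq_d; rewrite -code_levi_rho eq_d.
Qed.

Lemma levi_num_faces_leq rho lambda :
  scheme_ok levi_adj_sym rho lambda -> num_faces levi_adj_sym rho lambda <= 30.
Proof.
move=> rl_ok; have := num_faces_bipartite_leq levi_side_adj rl_ok levi_dart_sibling.
by rewrite levi_num_edges; lia.
Qed.

Lemma levi_euler_genus rho lambda :
  euler_genus levi_adj_sym rho lambda = (36 - (num_faces levi_adj_sym rho lambda)%:Z)%R.
Proof. by rewrite /euler_genus levi_num_vertices levi_num_edges; lia. Qed.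

Theorem lemma3p2 : is_nonorientable_genus levi_adj_sym 6.
Proof.
split.
  exists levi_rho, levi_lambda; split; first exact: levi_scheme_ok.
  right; split; first exact: levi_not_orientable.
  by rewrite levi_euler_genus; have := levi_num_faces_geq; lia.
move=> c lt_c6 [rho [lambda [rl_ok embeds]]].
have := levi_num_faces_leq rl_ok.
by case: embeds => -[_]; rewrite levi_euler_genus; lia.
Qed.
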